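(* Let $W$ be a (1-safe) DAW-net, $\mathrm{bc}(W)$ its $\mathcal{BC}$ encoding, and $\mathit{TS}_{\mathrm{bc}(W)}=(\mathcal{A},S,S_0,\delta)$ the transition system it induces. Then (1) $S_0$ is a singleton $\{s_0\}$; and (2) if $(s,A,s')\in\delta$ then $|A|=1$.
   Context: **DAW-nets.** Data model $\mathcal{D}=(\mathcal{V},\Delta,\mathrm{dm},\mathrm{ord})$ (variables; finite domains via total surjective $\mathrm{dm}$; partial orders on some domains); assignments are partial functions $\eta$ with $\eta(v)\in\mathrm{dm}(v)$; guards $\Phi::=\mathit{true}\mid\mathrm{def}(v)\mid t_1=t_2\mid t_1\le t_2\mid\neg\Phi\mid\Phi\wedge\Phi$. A DAW-net $W=\langle\mathcal{D},(P,T,F),\mathrm{wr},\mathrm{gd}\rangle$: a workflow Petri net with places $\mathit{start},\mathit{sink}$, presets ${}^\bullet t$, postsets $t^\bullet$; partial functions $\mathrm{wr}(t)$ with $\mathrm{wr}(t)(v)\subseteq\mathrm{dm}(v)$; guards $\mathrm{gd}(t)$. $\mathcal{V}'$: finite set of variables of $W$; $\mathrm{adm}(v)=\bigcup_t\mathrm{wr}(t)(v)$. $W$ is assumed 1-safe. **$\mathcal{BC}$ semantics.** Fluents have finite domains; laws: dynamic ''$A_0$ after $A'_1,\dots,A'_n$ ifcons $A_{n+1},\dots,A_m$'' ($A_0$ an atom $f=v$ or false; $A'_j$ atoms or action constants), static ''$A_0$ if ... ifcons ...'', ''initially $f=v$''. $P_\ell(B)$ is the disjunctive program (classical negation $\neg$,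 default negation $\sim$) containing: static laws as $i{:}A_0\leftarrow i{:}A_1,\dots,i{:}A_n,\sim\neg(i{:}A_{n+1}),\dots,\sim\neg(i{:}A_m)$, $0\le i\le\ell$; dynamic laws as $i{+}1{:}A_0\leftarrow i{:}A'_1,\dots,i{:}A'_n,\sim\neg(i{+}1{:}A_{n+1}),\dots,\sim\neg(i{+}1{:}A_m)$, $0\le i<\ell$ (constraints if $A_0$ is false); facts $0{:}f=v$ for ''initially $f=v$''; $0{:}f=v\vee\neg(0{:}f=v)$ for all fluents and values; $i{:}a\vee\neg(i{:}a)$ for action constants, $i<\ell$; and for $i\le\ell$ and fluent $f$ with domain $v_1,\dots,v_k$: $\leftarrow\sim(i{:}f=v_1),\dots,\sim(i{:}f=v_k)$ and $\neg(i{:}f=v)\leftarrow i{:}f=w$ ($v\ne w$). For a stable model (answer set) $X$ of $P_\ell(B)$ put $\sigma_i(X)=\{f\mapsto o\mid(i{:}f=o)\in X\}$. $\mathit{TS}_B=(\mathcal{A},S,S_0,\delta)$: $S_0=\{\sigma_0(X)\mid X$ stable model of $P_0(B)\}$; $S,\delta$ least with $S_0\subseteq S$ and, whenever $X$ is a stable model of $P_{\ell+1}(B)$ ($\ell\ge0$) with $\sigma_\ell(X)\in S$, $\sigma_{\ell+1}(X)\in S$ and $(\sigma_\ell(X),\{a\mid(\ell{:}a)\in X\},\sigma_{\ell+1}(X))\in\delta$. **The encoding $\mathrm{bc}(W)$.** Fluents $v\in\mathcal{V}'$ with domain $\mathrm{adm}(v)\cup\{\mathrm{null}\}$, Boolean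 fluents $p\in P$ and $\mathit{trans}$; action constants $t\in T$. Laws: ''$v=o$ after $v=o$ ifcons $v=o$''; ''$p=o$ after $p=o$ ifcons $p=o$''; for each $t$: ''$p=\mathrm{false}$ after $t$'' ($p\in{}^\bullet t\setminus t^\bullet$), ''$p=\mathrm{true}$ after $t$'' ($p\in t^\bullet\setminus{}^\bullet t$), ''$v=d$ after $t$ ifcons $v=d$'' ($d\in\mathrm{wr}(t)(v)$), ''$v=\mathrm{null}$ after $t$'' ($\mathrm{wr}(t)(v)=\emptyset$), ''false after $t$ ifcons $v=d$'' ($\mathrm{wr}(t)(v)\neq\emptyset$, $d\in\{\mathrm{null}\}\cup\mathrm{adm}(v)\setminus\mathrm{wr}(t)(v)$), ''false after $t,s$'' ($t\ne s$), ''false after $t,p=\mathrm{false}$'' ($p\in{}^\bullet t$), ''$\mathit{trans}=\mathrm{true}$ after $t$''; ''initially $\mathit{start}=\mathrm{true}$'', ''initially $p=\mathrm{false}$'' ($p\ne\mathit{start}$), ''initially $v=\mathrm{null}$'', ''initially $\mathit{trans}=\mathrm{true}$''; and for each $t$ with $\mathrm{gd}(t)\not\equiv\mathit{true}$, for a chosen formula $\bigvee_k t^k_1\wedge\dots\wedge t^k_{n_k}$ equivalent to $\neg\mathrm{gd}(t)$ with terms $v=o$ or $\neg\mathrm{def}(v)$, the laws ''false after $t,[\![t^k_1]\!],\dots,[\![t^k_{n_k}]\!]$'', where $[\![v=o]\!]=(v=o)$, $[\![\neg\mathrm{def}(v)]\!]=(v=\mathrm{null})$. *)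

From Stdlib Require Import List.
From mathcomp Require Import all_boot.
Set Implicit Arguments.
Unset Strict Implicit.
Unset Printing Implicit Defensive.

(* atoms usable after "after": fluent atoms f = o, or action constants a *)
Inductive batom (F O A : Type) : Type :=
| BF (f : F) (o : O)
| BA (a : A).

(* dynamic law  "A0 after A'_1,...,A'_n ifcons A_{n+1},...,A_m"
   (dhead = None encodes A0 = false) *)
Record dyn_law (F O A : Type) : Type := mkDyn {
  dhead   : option (F * O);
  dafter  : seq (batom F O A);
  difcons : seq (F * O) }.

(* static law  "A0 if A_1,...,A_n ifcons A_{n+1},...,A_m" *)
Record stat_law (F O : Type) : Type := mkStat {
  shead   : option (F * O);
  sif     : seq (F * O);
  sifcons : seq (F * O) }.

Record BCdesc : Type := mkBC {
  bF : Type;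
  bO : Type;
  bA : Type;
  bdom : bF -> seq bO;
  bstat : stat_law bF bO -> Prop;
  bdyn  : dyn_law bF bO bA -> Prop;
  binit : bF * bO -> Prop }.

(* time-stamped atoms  i:f=o  and  i:a ; literals with classical negation *)
Inductive tatom (F O A : Type) : Type :=
| TF (i : nat) (f : F) (o : O)
| TA (i : nat) (a : A).

Inductive lit (F O A : Type) : Type :=
| LPos (x : tatom F O A)
| LNeg (x : tatom F O A).

(* disjunctive rule  L_1 v ... v L_k <- B_1,...,B_n, ~C_1,...,~C_m
   (empty head = constraint) *)
Record rule (F O A : Type) : Type := mkRule {
  rhead : seq (lit F O A);
  rpos  : seq (lit F O A);
  rneg  : seq (lit F O A) }.

Definition program (F O A : Type) := rule F O A -> Prop.
Definition litset (F O A : Type) := lit F O A -> Prop.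

(* Y is closed under the Gelfond-Lifschitz reduct P^X *)
Definition closed_reduct F O A (P : program F O A) (X Y : litset F O A) :=
  forall r, P r ->
    (forall L, In L (rneg r) -> ~ X L) ->
    (forall L, In L (rpos r) -> Y L) ->
    exists L, In L (rhead r) /\ Y L.

Definition consistent F O A (X : litset F O A) :=
  forall x, ~ (X (LPos x) /\ X (LNeg x)).

Definition stable F O A (P : program F O A) (X : litset F O A) :=
  [/\ consistent X,
      closed_reduct P X X &
      forall Y : litset F O A, (forall L, Y L -> X L) ->
        closed_reduct P X Y -> forall L, X L -> Y L].

Section BCsem.
Variable B : BCdesc.
Notation F := (bF B).
Notation O := (bO B).
Notation A := (bA B).

Definition head_lits (i : nat) (h : option (F * O)) : seq (lit F O A) :=
  match h with None => [::] | Some (f, o) => [:: LPos (TF A i f o)] end.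
Definition pos_fl (i : nat) (fo : F * O) : lit F O A := LPos (TF A i fo.1 fo.2).
(* literal L such that "~ L" in the body means  ~ not(i:f=o) *)
Definition neg_fl (i : nat) (fo : F * O) : lit F O A := LNeg (TF A i fo.1 fo.2).
Definition batom_lit (i : nat) (b : batom F O A) : lit F O A :=
  match b with BF f o => LPos (TF A i f o) | BA a => LPos (TA F O i a) end.

Inductive Prog (l : nat) : program F O A :=
| P_static i s : i <= l -> @bstat B s ->
    Prog l (mkRule (head_lits i (shead s)) (map (pos_fl i) (sif s))
                   (map (neg_fl i) (sifcons s)))
| P_dynamic i d : i < l -> @bdyn B d ->
    Prog l (mkRule (head_lits i.+1 (dhead d)) (map (batom_lit i) (dafter d))
                   (map (neg_fl i.+1) (difcons d)))
| P_init f o : @binit B (f, o) ->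
    Prog l (mkRule [:: LPos (TF A 0 f o)] [::] [::])
| P_choice0 f o : In o (@bdom B f) ->
    Prog l (mkRule [:: LPos (TF A 0 f o); LNeg (TF A 0 f o)] [::] [::])
| P_choiceA i a : i < l ->
    Prog l (mkRule [:: LPos (TA F O i a); LNeg (TA F O i a)] [::] [::])
| P_exists i f : i <= l ->
    Prog l (mkRule [::] [::] (map (fun o => LPos (TF A i f o)) (@bdom B f)))
| P_unique i f v w : i <= l -> In v (@bdom B f) -> In w (@bdom B f) -> v <> w ->
    Prog l (mkRule [:: LNeg (TF A i f v)] [:: LPos (TF A i f w)] [::]).

(* states are the (partial) functions sigma_i(X) = {f |-> o | i:f=o in X},
   represented by their graphs *)
Definition state := F -> O -> Prop.
Definition sigma (i : nat) (X : litset F O A) : state :=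
  fun f o => X (LPos (TF A i f o)).
Definition actions (i : nat) (X : litset F O A) : A -> Prop :=
  fun a => X (LPos (TA F O i a)).

Definition TS_S0 (s : state) : Prop :=
  exists X, stable (Prog 0) X /\ s = sigma 0 X.

Inductive TS_S : state -> Prop :=
| TS_S_init s : TS_S0 s -> TS_S s
| TS_S_step l X : stable (Prog l.+1) X -> TS_S (sigma l X) ->
    TS_S (sigma l.+1 X).

Definition TS_delta (s : state) (As : A -> Prop) (s' : state) : Prop :=
  exists l X, [/\ stable (Prog l.+1) X, TS_S (sigma l X),
                  s = sigma l X, As = actions l X & s' = sigma l.+1 X].

End BCsem.

Inductive gterm (V D : Type) : Type :=
| TVar (v : V)
| TConst (c : D).

Inductive guard (V D : Type) : Type :=
| GTrue
| GDef (v : V)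
| GEq (t1 t2 : gterm V D)
| GLe (t1 t2 : gterm V D)
| GNot (g : guard V D)
| GAnd (g1 g2 : guard V D).

Record DAWnet : Type := mkDAW {
  Var : finType;
  Val : eqType;
  Dom : Type;
  delts : Dom -> seq Val;
  dm  : Var -> Dom;
  ord : Dom -> option (rel Val);       (* partial order on some domains  *)
  (* Petri net (P, T, F):  pre t = .t = {p | (p,t) in F},
                           post t = t. = {p | (t,p) in F} *)
  Place : finType;
  Trans : finType;
  pre  : Trans -> {set Place};
  post : Trans -> {set Place};
  start : Place;
  sink  : Place;
  (* wr(t) is a partial function: None = v not in dom(wr(t));
     Some ws = wr(t)(v) is the (finite) set of elements of ws *)
  wr : Trans -> Var -> option (seq Val);
  gd : Trans -> guard Var Val }.

Section DAW.
Variable W : DAWnet.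
Notation V := (Var W).
Notation D := (Val W).
Notation P := (Place W).
Notation T := (Trans W).
Notation pstart := (start W).
Notation psink := (sink W).

Definition dm_surjective := forall d : Dom W, exists v, dm v = d.

Definition is_partial_order (xs : seq D) (le : rel D) :=
  [/\ forall x, x \in xs -> le x x,
      forall x y, x \in xs -> y \in xs -> le x y -> le y x -> x = y &
      forall x y z, x \in xs -> y \in xs -> z \in xs ->
        le x y -> le y z -> le x z].

Definition ord_ok :=
  forall (d : Dom W) le, ord d = Some le -> is_partial_order (delts d) le.

Definition wr_ok :=
  forall (t : T) (v : V) ws, wr t v = Some ws ->
    forall x, x \in ws -> x \in delts (dm v).

Definition flow : rel (P + T)%type :=
  fun n m => match n, m with
             | inl p, inr t => p \in pre t
             | inr t, inl p => p \in post t
             | _, _ => false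
             end.

Definition workflow_net :=
  [/\ forall t : T, pstart \notin post t,
      forall t : T, psink \notin pre t &
      forall n : (P + T)%type,
        connect flow (inl pstart) n && connect flow n (inl psink)].

Definition DAW_wf : Prop := [/\ dm_surjective, ord_ok, wr_ok & workflow_net].

Definition assignment := V -> option D.
Definition legal (eta : assignment) :=
  forall v x, eta v = Some x -> x \in delts (dm v).

Definition teval (eta : assignment) (t : gterm V D) : option D :=
  match t with TVar v => eta v | TConst c => Some c end.

Fixpoint gholds (eta : assignment) (g : guard V D) : Prop :=
  match g with
  | GTrue => True
  | GDef v => eta v <> None
  | GEq t1 t2 => exists x, teval eta t1 = Some x /\ teval eta t2 = Some x
  | GLe t1 t2 => exists x y d le,
      [/\ teval eta t1 = Some x, teval eta t2 = Some y, ord d = Some le,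
          (x \in delts d) && (y \in delts d) & le x y]
  | GNot g => ~ gholds eta g
  | GAnd g1 g2 => gholds eta g1 /\ gholds eta g2
  end.

Definition gvalid (g : guard V D) := forall eta, legal eta -> gholds eta g.

Definition marking := P -> nat.

Definition fire (M : marking) (eta : assignment) (t : T)
                (M' : marking) (eta' : assignment) : Prop :=
  [/\ forall p, p \in pre t -> 1 <= M p,
      gholds eta (gd t),
      forall p, M' p = M p - (p \in pre t) + (p \in post t) &
      forall v, match wr t v with
                | None => eta' v = eta v
                | Some ws => if ws is [::] then eta' v = None
                             else exists2 x, x \in ws & eta' v = Some x
                end].

Definition M0 : marking := fun p => if p == pstart then 1 else 0.
Definition eta0 : assignment := fun _ => None.

Inductive reachable : marking -> assignment -> Prop :=
| reach0 : reachable M0 eta0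
| reachS M eta t M' eta' :
    reachable M eta -> fire M eta t M' eta' -> reachable M' eta'.

Definition one_safe := forall M eta, reachable M eta -> forall p, M p <= 1.

Inductive bcF : Type := FV (v : V) | FP (p : P) | FT.
Inductive bcO : Type := ONull | OD (x : D) | OB (b : bool).

Definition adm (v : V) : seq D :=
  flatten [seq odflt [::] (wr t v) | t <- enum T].

Definition bcdom (f : bcF) : seq bcO :=
  match f with
  | FV v => ONull :: map OD (adm v)
  | FP _ | FT => [:: OB true; OB false]
  end.

(* literals of the chosen DNF of ~gd(t): "v = o" or "~def(v)" *)
Inductive dnf_lit : Type := DEq (v : V) (o : D) | DUndef (v : V).

Definition dnf_lit_holds (eta : assignment) (l : dnf_lit) : Prop :=
  match l with DEq v o => eta v = Some o | DUndef v => eta v = None end.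

Definition dnf_ok (dnf : T -> seq (seq dnf_lit)) :=
  forall t, ~ gvalid (gd t) ->
    forall eta, legal eta ->
      (~ gholds eta (gd t) <->
       exists2 k, In k (dnf t) & forall l, In l k -> dnf_lit_holds eta l).

Definition enc (l : dnf_lit) : batom bcF bcO T :=
  match l with DEq v o => @BF bcF bcO T (FV v) (OD o) | DUndef v => @BF bcF bcO T (FV v) ONull end.

Inductive bc_dyn (dnf : T -> seq (seq dnf_lit)) : dyn_law bcF bcO T -> Prop :=
| d_inert_var v o : In o (bcdom (FV v)) ->
    bc_dyn dnf (mkDyn (Some (FV v, o)) [:: @BF bcF bcO T (FV v) o] [:: (FV v, o)])
| d_inert_place p o : In o (bcdom (FP p)) ->
    bc_dyn dnf (mkDyn (Some (FP p, o)) [:: @BF bcF bcO T (FP p) o] [:: (FP p, o)])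
| d_consume t p : p \in pre t -> p \notin post t ->
    bc_dyn dnf (mkDyn (Some (FP p, OB false)) [:: BA bcF bcO t] [::])
| d_produce t p : p \in post t -> p \notin pre t ->
    bc_dyn dnf (mkDyn (Some (FP p, OB true)) [:: BA bcF bcO t] [::])
| d_write t v ws d : wr t v = Some ws -> d \in ws ->
    bc_dyn dnf (mkDyn (Some (FV v, OD d)) [:: BA bcF bcO t] [:: (FV v, OD d)])
| d_delete t v : wr t v = Some [::] ->
    bc_dyn dnf (mkDyn (Some (FV v, ONull)) [:: BA bcF bcO t] [::])
| d_restrict t v ws o : wr t v = Some ws -> ws <> [::] ->
    (o = ONull \/ exists2 x, o = OD x & (x \in adm v) && (x \notin ws)) ->
    bc_dyn dnf (mkDyn None [:: BA bcF bcO t] [:: (FV v, o)])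
| d_excl t s : t <> s ->
    bc_dyn dnf (mkDyn None [:: BA bcF bcO t; BA bcF bcO s] [::])
| d_enabled t p : p \in pre t ->
    bc_dyn dnf (mkDyn None [:: BA bcF bcO t; @BF bcF bcO T (FP p) (OB false)] [::])
| d_trans t :
    bc_dyn dnf (mkDyn (Some (FT, OB true)) [:: BA bcF bcO t] [::])
| d_guard t k : ~ gvalid (gd t) -> In k (dnf t) ->
    bc_dyn dnf (mkDyn None (BA bcF bcO t :: map enc k) [::]).

Inductive bc_init : bcF * bcO -> Prop :=
| i_start : bc_init (FP pstart, OB true)
| i_place p : p <> pstart -> bc_init (FP p, OB false)
| i_var v : bc_init (FV v, ONull)
| i_trans : bc_init (FT, OB true).

Definition bc (dnf : T -> seq (seq dnf_lit)) : BCdesc :=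
  @mkBC bcF bcO T bcdom (fun _ => False) (bc_dyn dnf) bc_init.

End DAW.

(* An answer set is a minimal model of its reduct, so every literal in it is
   supported by a rule.  At time 0 the only rules deriving fluent atoms are the
   "initially" facts and the choice rules; as bc(W) gives every fluent exactly
   one initial value, the uniqueness constraints force the answer set of P_0 to
   be the one generated by these facts.  At time l+1 the fluent trans must take
   a value, and with no static laws that value must be caused by a dynamic law;
   the only one with head trans is "trans = true after t", so some transition t
   occurs at time l, and the laws "false after t, s" exclude a second one. *)
From Stdlib Require Import List Classical FunctionalExtensionality PropExtensionality.
From mathcomp Require Import all_boot.

Set Implicit Arguments.
Unset Strict Implicit.
Unset Printing Implicit Defensive.

Section AnswerSets.
Variables F O A : Type.
Variable P : program F O A.
Implicit Types X Y : litset F O A.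

Lemma closed_reduct_head X Y r L :
  closed_reduct P X Y -> P r -> rhead r = [:: L] ->
  (forall L', In L' (rpos r) -> Y L') -> (forall L', In L' (rneg r) -> ~ X L') ->
  Y L.
Proof.
move=> cl Pr hr pos neg; have [L' []] := cl r Pr neg pos.
by rewrite hr => -[<-|[]].
Qed.

Lemma closed_reduct_constraint X Y r :
  closed_reduct P X Y -> P r -> rhead r = [::] ->
  (forall L', In L' (rpos r) -> Y L') -> (forall L', In L' (rneg r) -> ~ X L') ->
  False.
Proof. by move=> cl Pr hr pos neg; have [L' []] := cl r Pr neg pos; rewrite hr. Qed.

Lemma stable_supported X L : stable P X -> X L ->
  exists r, [/\ P r, In L (rhead r), forall L', In L' (rneg r) -> ~ X L' &
                forall L', In L' (rpos r) -> X L'].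
Proof.
move=> [_ clX minX] XL; apply: NNPP => unsupported.
suff [] : X L /\ L <> L by [].
apply: (minX (fun L' => X L' /\ L' <> L)) => // [L' [] //|r Pr neg pos].
have [L' [inL' XL']] := clX r Pr neg (fun L' inL' => (pos L' inL').1).
exists L'; split=> //; split=> // eL'; apply: unsupported.
by exists r; split=> //; [rewrite -eL' | move=> L'' /pos[]].
Qed.

End AnswerSets.

Section BCPrograms.
Variable B : BCdesc.
Local Notation F := (bF B).
Local Notation O := (bO B).
Local Notation A := (bA B).
Implicit Types X : litset F O A.

Lemma in_head_lits i j f o h :
  In (LPos (TF A j f o)) (head_lits i h) -> i = j /\ h = Some (f, o).
Proof. by case: h => [[f' o']|] //= [[-> -> ->]|]. Qed.

Lemma stable_value_exists l X i f : stable (Prog l) X -> i <= l ->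
  exists2 o, In o (bdom f) & X (LPos (TF A i f o)).
Proof.
move=> [_ clX _] le_il; apply: NNPP => none.
apply: (closed_reduct_constraint clX (P_exists f le_il)) => //= L.
by case/in_map_iff=> o [<- dom_o] Xo; apply: none; exists o.
Qed.

Lemma stable_value_unique l X i f v w : stable (Prog l) X -> i <= l ->
  In v (bdom f) -> In w (bdom f) ->
  X (LPos (TF A i f v)) -> X (LPos (TF A i f w)) -> v = w.
Proof.
move=> [consX clX _] le_il dom_v dom_w Xv Xw; apply: NNPP => ne_vw.
apply: (consX (TF A i f v)); split=> //.
by apply: (closed_reduct_head clX (P_unique le_il dom_v dom_w ne_vw)) => // L [<-|[]].
Qed.

Lemma stable_action_unique l X i a b : stable (Prog l) X -> i < l ->
  (forall a b, a <> b -> bdyn (mkDyn None [:: BA F O a; BA F O b] [::])) ->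
  X (LPos (TA F O i a)) -> X (LPos (TA F O i b)) -> a = b.
Proof.
move=> [_ clX _] lt_il excl Xa Xb; apply: NNPP => ne_ab.
apply: (closed_reduct_constraint clX (P_dynamic lt_il (excl a b ne_ab))) => //=.
by move=> L [<-|[<-|[]]].
Qed.

Hypothesis no_static : forall s : stat_law F O, ~ bstat s.

Lemma stable_value_caused l X i f o : stable (Prog l) X ->
  X (LPos (TF A i.+1 f o)) ->
  exists d, [/\ bdyn d, dhead d = Some (f, o) &
                forall b, In b (dafter d) -> X (batom_lit i b)].
Proof.
move=> stX /(stable_supported stX)[r [Pr]].
case: r / Pr => [j s _ /no_static[] | j d _ dyn_d | f' o' _ | f' o' _ | j a _
                | j f' _ | j f' v w _ _ _ _] /=.
- case/in_head_lits=> [[->] hd] _ pos; exists d; split=> // b b_d.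
  by apply: pos; apply: in_map.
all: by move=> head; exfalso; intuition discriminate.
Qed.

Hypothesis init_functional :
  forall (f : F) (o o' : O), binit (f, o) -> binit (f, o') -> o = o'.
Hypothesis init_total : forall f : F, exists2 o : O, binit (f, o) & In o (bdom f).

Lemma stable_init_value l X f o : stable (Prog l) X ->
  X (LPos (TF A 0 f o)) <-> binit (f, o).
Proof.
move=> stX; have [_ clX _] := stX.
have init_in_X o' : binit (f, o') -> X (LPos (TF A 0 f o')).
  by move=> init_o'; apply: (closed_reduct_head clX (P_init l init_o')).
split=> [Xo|]; last exact: init_in_X.
have [r [Pr]] := stable_supported stX Xo.
case: r / Pr => [j s _ /no_static[] | j d _ _ | f' o' init' | f' o' dom' | j a _
                | j f' _ | j f' v w _ _ _ _] /=.
- by case/in_head_lits.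
- by case=> [[<- <-]|[]].
- case=> [[ef eo]|[//|[]]] _ _; subst f' o'.
  have [o0 init_o0 dom_o0] := init_total f.
  by rewrite (stable_value_unique stX _ dom' dom_o0 Xo (init_in_X _ init_o0)).
all: by move=> head; exfalso; intuition discriminate.
Qed.

Definition init_model : litset F O A := fun L =>
  match L with
  | LPos (TF i f o) => i = 0 /\ binit (f, o)
  | LNeg (TF i f o) => [/\ i = 0, In o (bdom f) & ~ binit (f, o)]
  | _ => False
  end.

Lemma init_model_stable : stable (Prog 0) init_model.
Proof.
split.
- by case=> [i f o|i a] [] //= [_ ?] [].
- move=> r Pr; case: r / Pr => [j s _ /no_static[] | j d // | f o init_fo | f o dom_o
                               | j a // | j f | j f v w] /=.
  + by exists (LPos (TF A 0 f o)); split; [left|].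
  + move=> _ _; have [init_fo|not_init_fo] := classic (binit (f, o)).
      by exists (LPos (TF A 0 f o)); split; [left|].
    by exists (LNeg (TF A 0 f o)); split; [right; left|].
  + rewrite leqn0 => /eqP -> none _; exfalso.
    have [o init_o dom_o] := init_total f.
    by apply: (none (LPos (TF A 0 f o))) => //; apply/in_map_iff; exists o.
  + move=> _ dom_v _ ne_vw _ /(_ _ (or_introl erefl)) [-> init_w].
    exists (LNeg (TF A 0 f v)); split; first by left.
    by split=> // init_v; apply: ne_vw; apply: init_functional init_v init_w.
- move=> Y _ clY [[i f o|i a] |[i f o|i a]] //=.
  + case=> -> init_fo; exact: (closed_reduct_head clY (P_init 0 init_fo)).
  + case=> -> dom_o not_init_o.
    have [o' init_o' dom_o'] := init_total f.
    have ne_oo' : o <> o' by move=> eo; apply: not_init_o; rewrite eo.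
    have Yo' : Y (LPos (TF A 0 f o')).
      by apply: (closed_reduct_head clY (P_init 0 init_o')).
    apply: (closed_reduct_head clY (P_unique (leqnn 0) dom_o dom_o' ne_oo')) => //.
    by move=> L [<-|[]].
Qed.

Lemma sigma0_stable l X : stable (Prog l) X ->
  sigma 0 X = fun (f : F) (o : O) => binit (f, o).
Proof.
move=> stX; apply: functional_extensionality => f.
apply: functional_extensionality => o.
exact/propositional_extensionality/(stable_init_value _ _ stX).
Qed.

Lemma TS_S0_init (s : state B) : TS_S0 s <-> s = fun (f : F) (o : O) => binit (f, o).
Proof.
split=> [[X [stX ->]]|->]; first exact: sigma0_stable stX.
exists init_model; rewrite (sigma0_stable init_model_stable).
by split=> //; apply: init_model_stable.
Qed.

End BCPrograms.

Section Encoding.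
Variable W : DAWnet.
Variable dnf : Trans W -> seq (seq (dnf_lit W)).

Lemma bc_init_functional (f : bcF W) o o' : bc_init (f, o) -> bc_init (f, o') -> o = o'.
Proof. by move=> init_o init_o'; inversion init_o; inversion init_o'; subst; congruence. Qed.

Lemma bc_init_total f : exists2 o, @bc_init W (f, o) & In o (bcdom f).
Proof.
case: f => [v|p|]; last by exists (OB W true); [constructor | left].
  by exists (ONull W); [constructor | left].
have [->|ne_p] := p =P start W; first by exists (OB W true); [constructor | left].
by exists (OB W false); [constructor | right; left].
Qed.

Lemma bc_trans_caused_by_action d o :
  bc_dyn dnf d -> dhead d = Some (FT W, o) -> exists t, In (BA _ _ t) (dafter d).
Proof. by case=> //= t _; exists t; left. Qed.

Lemma bc_stable_action_exists l X : stable (@Prog (bc dnf) l.+1) X ->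
  exists t, X (LPos (TA _ _ l t)).
Proof.
move=> stX; have [o _ Xo] := stable_value_exists (B := bc dnf) (FT W) stX (leqnn _).
have [d [dyn_d hd pos]] := stable_value_caused (B := bc dnf) (fun _ => id) stX Xo.
have [t t_d] := bc_trans_caused_by_action dyn_d hd.
by exists t; apply: pos t_d.
Qed.

End Encoding.

Theorem mainTheorem5 (W : DAWnet) (dnf : Trans W -> seq (seq (dnf_lit W))) :
  DAW_wf W -> one_safe W -> dnf_ok dnf ->
  (exists s0, forall s, @TS_S0 (bc dnf) s <-> s = s0) /\
  (forall s As s', @TS_delta (bc dnf) s As s' ->
     exists a, forall b, As b <-> b = a).
Proof.
move=> _ _ _; split.
- eexists; apply: TS_S0_init => [? []||].
  + exact: bc_init_functional.
  + exact: bc_init_total.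
- move=> s As s' [l [X [stX _ _ -> _]]].
  have [a Xa] := bc_stable_action_exists stX.
  exists a => b; split=> [Xb | ->] //.
  exact: stable_action_unique stX (ltnSn l) (@d_excl W dnf) Xb Xa.
Qed.
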